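(* Let $\tilde{x}$, $F$ and $\bar{x}=F(\bar{y})=\tilde{x}-\beta\bar{y}$ be as in the context (all depending on $\bar{y}>0$), and let $$y^*=\frac{1}{\beta(\rho+2\kappa)}\Big((\mu-\rho c)(\rho+\kappa)-\rho\frac{\psi(\mu)}{\psi'(\mu)}\Big).$$ Consider the line of means $\{(\mu-\beta y,y):y\in[0,\bar{y}]\}$. Then: (1) if $F(0)>\mu$, the line of means does not meet the installation region, i.e. $\mu-\beta y<F(y)$ for all $y\in[0,\bar{y}]$; (2) if $F(0)\leq\mu$ and $\bar{y}\geq y^*$, the line of means meets the free boundary, i.e. there exists $y\in[0,\bar{y}]$ with $F(y)=\mu-\beta y$; (3) if $\bar{y}\leq y^*$, the line of means meets the installation region at its upper bound $y=\bar{y}$, i.e. $\mu-\beta\bar{y}\geq\bar{x}$.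
   Context: Fix constants $\mu\in\mathbb{R}$, $\kappa>0$, $\sigma>0$, $\rho>0$, $\beta>0$, $c\geq0$, $\bar{y}>0$. Let $D_\alpha(x)=\frac{e^{-x^2/4}}{\Gamma(-\alpha)}\int_0^\infty t^{-\alpha-1}e^{-t^2/2-xt}dt$ ($\alpha<0$) and $\psi(x)=e^{\frac{\kappa(x-\mu)^2}{2\sigma^2}}D_{-\rho/\kappa}\big(-\frac{x-\mu}{\sigma}\sqrt{2\kappa}\big)$, the strictly increasing positive solution of $\frac{\sigma^2}{2}u''+\kappa(\mu-x)u'-\rho u=0$. Let $\tilde{R}(x,y)=\frac{\mu\kappa+\rho x-\beta(\rho+2\kappa)y}{\rho(\rho+\kappa)}$, $Q_k(z)=\psi^{(k)}(z)\psi^{(k+2)}(z)-\psi^{(k+1)}(z)^2$. Let $\tilde{x}=\tilde{x}(\bar{y})$ be the unique real zero of $H(x)=\psi'(x)(c-\tilde{R}(x,\bar{y}))+(\rho+\kappa)^{-1}\psi(x)$. Let $D(y,z)=\psi(z)[(\rho+\kappa)(c-\tilde{R}(z,y))Q_1(z)+Q_0'(z)]$, $N(y,z)=Q_0(z)\big(\frac{\rho+2\kappa}{\rho}\psi'(z)+(\rho+\kappa)(c-\tilde{R}(z,y))\psi''(z)+\psi'(z)\big)$, $\mathcal{G}=\beta N/D$. Let $\tilde{F}$ be the unique solution on $[0,\bar{y}]$ of $\tilde{F}'(y)=\mathcal{G}(y,\tilde{F}(y))$ with $\tilde{F}(\bar{y})=\tilde{x}$, and $F(y)=\tilde{F}(y)-\beta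 y$ (strictly increasing, the free boundary). The installation region is $\{(x,y):y\in[0,\bar{y}),x\geq F(y)\}$. *)

From Stdlib Require Import Reals.
From Coquelicot Require Import Coquelicot.
Open Scope R_scope.

Definition Gamma (s : R) : R :=
  RInt_gen (fun t => Rpower t (s - 1) * exp (- t)) (at_right 0) (Rbar_locally p_infty).

(* Parabolic cylinder function, integral representation (alpha < 0):
   D_alpha(x) = e^{-x^2/4}/Gamma(-alpha) * int_0^oo t^{-alpha-1} e^{-t^2/2 - x t} dt *)
Definition Dpar (alpha x : R) : R :=
  exp (- x ^ 2 / 4) / Gamma (- alpha) *
  RInt_gen (fun t => Rpower t (- alpha - 1) * exp (- t ^ 2 / 2 - x * t))
           (at_right 0) (Rbar_locally p_infty).

Definition psi (mu kappa sigma rho : R) (x : R) : R :=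
  exp (kappa * (x - mu) ^ 2 / (2 * sigma ^ 2)) *
  Dpar (- rho / kappa) (- (x - mu) / sigma * sqrt (2 * kappa)).

Definition dpsi (mu kappa sigma rho : R) (k : nat) (x : R) : R :=
  Derive_n (psi mu kappa sigma rho) k x.

Definition Qk (mu kappa sigma rho : R) (k : nat) (z : R) : R :=
  dpsi mu kappa sigma rho k z * dpsi mu kappa sigma rho (k + 2) z
  - (dpsi mu kappa sigma rho (k + 1) z) ^ 2.

Definition Rtilde (mu kappa rho beta : R) (x y : R) : R :=
  (mu * kappa + rho * x - beta * (rho + 2 * kappa) * y) / (rho * (rho + kappa)).

Definition Hfun (mu kappa sigma rho beta c ybar : R) (x : R) : R :=
  dpsi mu kappa sigma rho 1 x * (c - Rtilde mu kappa rho beta x ybar)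
  + psi mu kappa sigma rho x / (rho + kappa).

Definition Dfun (mu kappa sigma rho beta c : R) (y z : R) : R :=
  psi mu kappa sigma rho z *
  ((rho + kappa) * (c - Rtilde mu kappa rho beta z y) * Qk mu kappa sigma rho 1 z
   + Derive (Qk mu kappa sigma rho 0) z).

Definition Nfun (mu kappa sigma rho beta c : R) (y z : R) : R :=
  Qk mu kappa sigma rho 0 z *
  ((rho + 2 * kappa) / rho * dpsi mu kappa sigma rho 1 z
   + (rho + kappa) * (c - Rtilde mu kappa rho beta z y) * dpsi mu kappa sigma rho 2 z
   + dpsi mu kappa sigma rho 1 z).

Definition Gfun (mu kappa sigma rho beta c : R) (y z : R) : R :=
  beta * Nfun mu kappa sigma rho beta c y z / Dfun mu kappa sigma rho beta c y z.

Definition ystar (mu kappa sigma rho beta c : R) : R :=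
  1 / (beta * (rho + 2 * kappa)) *
  ((mu - rho * c) * (rho + kappa)
   - rho * (psi mu kappa sigma rho mu / dpsi mu kappa sigma rho 1 mu)).

(* Substituting the integral for D_alpha, the Gaussian prefactors cancel and
   psi(x) = Gamma(a)^-1 int_0^oo t^(a-1) exp(-t^2/2 + s (x - mu) t) dt,
   with a = rho/kappa and s = sqrt(2 kappa)/sigma.  Differentiating under the
   integral multiplies the integrand by s t, so every psi^(k) has the same form;
   in particular all psi^(k) are positive and nondecreasing.  Since R~(., ybar)
   is affine with slope 1/(rho+kappa), H' = psi'' (c - R~(., ybar)): H is
   positive up to the point where R~ = c and then decreases at least linearly,
   so it becomes negative.  At mu, H(mu) is a positive multiple of ybar - y*.
   As x~ is the only zero of H, the intermediate value theorem gives x~ >= mu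
   when ybar >= y* and x~ <= mu when ybar <= y*.  Part (3) is then
   F(ybar) = x~ - beta ybar <= mu - beta ybar, part (2) is the intermediate value
   theorem for F~ = F + beta y between F~(0) <= mu <= F~(ybar) = x~, and part (1)
   is the monotonicity of F; of the ODE for F~ only continuity is used. *)

From Stdlib Require Import Reals Lra Ranalysis5 Classical FunctionalExtensionality.
From Coquelicot Require Import Coquelicot.
Open Scope R_scope.

Notation is_RInt_0oo f l := (is_RInt_gen f (at_right 0) (Rbar_locally p_infty) l).
Notation RInt_0oo f := (RInt_gen f (at_right 0) (Rbar_locally p_infty)).

Lemma exp_le_exp x y : x <= y -> exp x <= exp y.
Proof. intros [H|H]; [left; apply exp_increasing; auto | subst; lra]. Qed.

Lemma Rpower_1_l y : Rpower 1 y = 1.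
Proof. unfold Rpower. rewrite ln_1, Rmult_0_r. apply exp_0. Qed.

Lemma mul_ln_le_half_add c : exists K, forall t, 1 <= t -> c * ln t <= t / 2 + K.
Proof.
  set (C := Rabs c + 1).
  assert (HC : 0 < C) by (unfold C; pose proof (Rabs_pos c); lra).
  exists (C * (ln (2 * C) - 1)). intros t Ht.
  assert (Hln : 0 <= ln t) by (rewrite <- ln_1; apply ln_le; lra).
  assert (Hc : c * ln t <= C * ln t).
  { apply Rmult_le_compat_r; auto. unfold C; pose proof (Rle_abs c); lra. }
  assert (Hsplit : ln t = ln (t / (2 * C)) + ln (2 * C)).
  { rewrite <- ln_mult by (try apply Rdiv_lt_0_compat; lra). f_equal. field. lra. }
  assert (Hv : ln (t / (2 * C)) <= t / (2 * C) - 1).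
  { rewrite <- (ln_exp (t / (2 * C) - 1)).
    apply ln_le; [apply Rdiv_lt_0_compat; lra | pose proof (exp_ineq1_le (t / (2 * C) - 1)); lra]. }
  assert (C * ln t <= C * (t / (2 * C) - 1 + ln (2 * C))).
  { rewrite Hsplit. apply Rmult_le_compat_l; lra. }
  assert (C * (t / (2 * C) - 1 + ln (2 * C)) = t / 2 + C * (ln (2 * C) - 1)) by (field; lra).
  lra.
Qed.

Lemma filter_prod_0oo (Q : R * R -> Prop) : (forall a b, 0 < a <= b -> Q (a, b)) ->
  filter_prod (at_right 0) (Rbar_locally p_infty) Q.
Proof.
  intros HQ. apply (Filter_prod _ _ _ (fun a => 0 < a < 1) (fun b => 1 < b)).
  - exists (mkposreal 1 Rlt_0_1). intros y Hy Hy0. simpl in *.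
    unfold ball in Hy; simpl in Hy; unfold AbsRing_ball, abs, minus, plus, opp in Hy; simpl in Hy.
    rewrite Ropp_0, Rplus_0_r in Hy. apply Rabs_def2 in Hy. lra.
  - exists 1. intros; lra.
  - intros a b Ha Hb. apply HQ. lra.
Qed.

Lemma is_RInt_0oo_norm_le (f g : R -> R) (lf lg : R) :
  is_RInt_0oo f lf -> is_RInt_0oo g lg ->
  (forall t, 0 < t -> Rabs (f t) <= g t) -> Rabs lf <= lg.
Proof.
  intros Hf Hg Hfg.
  apply (RInt_gen_norm (V := R_CompleteNormedModule) (Fa := at_right 0)
           (Fb := Rbar_locally p_infty) f g lf lg); auto;
    apply filter_prod_0oo; intros a b Hab; simpl; [lra |].
  intros t Ht. apply Hfg. lra.
Qed.

Lemma is_RInt_0oo_lin (f1 f2 : R -> R) (l1 l2 a b : R) :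
  is_RInt_0oo f1 l1 -> is_RInt_0oo f2 l2 ->
  is_RInt_0oo (fun t => a * f1 t + b * f2 t) (a * l1 + b * l2).
Proof.
  intros H1 H2.
  exact (is_RInt_gen_plus (V := R_NormedModule) _ _ _ _
           (is_RInt_gen_scal (V := R_NormedModule) f1 a l1 H1)
           (is_RInt_gen_scal (V := R_NormedModule) f2 b l2 H2)).
Qed.

Section NonnegIntegrand.

Variable f : R -> R.
Hypothesis f_cont : forall t, 0 < t -> continuous f t.
Hypothesis f_nonneg : forall t, 0 < t -> 0 <= f t.

Lemma ex_RInt_pos a b : 0 < a -> 0 < b -> ex_RInt f a b.
Proof.
  intros Ha Hb. apply (ex_RInt_continuous (V := R_CompleteNormedModule)).
  intros z Hz. apply f_cont.
  assert (0 < Rmin a b) by (apply Rmin_glb_lt; auto). lra.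
Qed.

Lemma RInt_le_RInt_superset a x y b :
  0 < a -> a <= x -> x <= y -> y <= b -> RInt f x y <= RInt f a b.
Proof.
  intros Ha Hax Hxy Hyb.
  assert (E : RInt f a b = RInt f a x + RInt f x y + RInt f y b).
  { rewrite <- (RInt_Chasles f a x b), <- (RInt_Chasles f x y b) by (apply ex_RInt_pos; lra).
    unfold plus; simpl. ring. }
  assert (0 <= RInt f a x) by (apply RInt_ge_0; [lra | apply ex_RInt_pos; lra | intros; apply f_nonneg; lra]).
  assert (0 <= RInt f y b) by (apply RInt_ge_0; [lra | apply ex_RInt_pos; lra | intros; apply f_nonneg; lra]).
  lra.
Qed.

Lemma is_RInt_0oo_sup B : (forall x y, 0 < x <= y -> RInt f x y <= B) ->
  exists l, is_RInt_0oo f l /\ forall x y, 0 < x <= y -> RInt f x y <= l.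
Proof.
  intros HB.
  set (E := fun v => exists x y, 0 < x <= y /\ v = RInt f x y).
  assert (E_bound : bound E) by (exists B; intros v [x [y [Hxy ->]]]; auto).
  assert (E_inhab : exists v, E v) by (exists (RInt f 1 1), 1, 1; split; [lra | auto]).
  destruct (completeness E E_bound E_inhab) as [l [Hub Hlub]].
  assert (Hup : forall x y, 0 < x <= y -> RInt f x y <= l) by (intros x y Hxy; apply Hub; exists x, y; auto).
  exists l. split; auto.
  intros P [eps HP]. simpl.
  assert (Happrox : exists x0 y0, 0 < x0 <= y0 /\ l - eps < RInt f x0 y0).
  { apply NNPP. intros Hno.
    assert (l <= l - eps); [| destruct eps; simpl in *; lra].
    apply Hlub. intros v [x [y [Hxy ->]]].
    apply Rnot_lt_le. intros Hlt. apply Hno. exists x, y; auto. }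
  destruct Happrox as [x0 [y0 [Hxy0 Hl0]]].
  apply (Filter_prod _ _ _ (fun a => 0 < a <= x0) (fun b => y0 <= b)).
  - exists (mkposreal x0 ltac:(lra)). intros y Hy Hy0. simpl in *.
    unfold ball in Hy; simpl in Hy; unfold AbsRing_ball, abs, minus, plus, opp in Hy; simpl in Hy.
    rewrite Ropp_0, Rplus_0_r in Hy. apply Rabs_def2 in Hy. lra.
  - exists y0. intros; lra.
  - intros a b Ha Hb. exists (RInt f a b). split.
    + apply (RInt_correct (V := R_CompleteNormedModule)). apply ex_RInt_pos; lra.
    + apply HP. unfold ball; simpl; unfold AbsRing_ball, abs, minus, plus, opp; simpl.
      assert (RInt f x0 y0 <= RInt f a b) by (apply RInt_le_RInt_superset; lra).
      assert (RInt f a b <= l) by (apply Hup; lra).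
      apply Rabs_def1; lra.
Qed.

Variables (b M : R).
Hypothesis b_gt : -1 < b.
Hypothesis f_le_power : forall t, 0 < t <= 1 -> f t <= M * Rpower t b.
Hypothesis f_le_exp : forall t, 1 <= t -> f t <= M * exp (- t / 2).

Lemma M_nonneg : 0 <= M.
Proof.
  pose proof (f_le_power 1 ltac:(lra)). pose proof (f_nonneg 1 ltac:(lra)).
  rewrite Rpower_1_l in *. lra.
Qed.

Lemma RInt_to_1_le x : 0 < x <= 1 -> RInt f x 1 <= M / (b + 1).
Proof.
  intros Hx.
  set (G := fun t => M / (b + 1) * Rpower t (b + 1)).
  assert (HG : forall t, Rmin x 1 <= t <= Rmax x 1 -> is_derive G t (M * Rpower t b)).
  { intros t Ht. rewrite Rmin_left, Rmax_right in Ht by lra.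
    replace (M * Rpower t b) with (M / (b + 1) * ((b + 1) * Rpower t (b + 1 - 1)))
      by (replace (b + 1 - 1) with b by ring; field; lra).
    apply is_derive_scal, is_derive_Reals, derivable_pt_lim_power. lra. }
  assert (Hcont : forall t, Rmin x 1 <= t <= Rmax x 1 -> continuous (fun t => M * Rpower t b) t).
  { intros t Ht. rewrite Rmin_left, Rmax_right in Ht by lra.
    apply (ex_derive_continuous (K := R_AbsRing) (V := R_NormedModule)).
    eexists. apply is_derive_scal, is_derive_Reals, derivable_pt_lim_power. lra. }
  pose proof (is_RInt_derive _ _ x 1 HG Hcont) as HI.
  assert (Hle : RInt f x 1 <= RInt (fun t => M * Rpower t b) x 1).
  { apply RInt_le; [lra | apply ex_RInt_pos; lra | eexists; exact HI |].
    intros; apply f_le_power; lra. }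
  rewrite (is_RInt_unique _ _ _ _ HI) in Hle. unfold minus, plus, opp, G in Hle; simpl in Hle.
  rewrite Rpower_1_l in Hle.
  assert (0 <= M / (b + 1) * Rpower x (b + 1)).
  { apply Rmult_le_pos; [apply Rdiv_le_0_compat; [apply M_nonneg | lra] | left; apply exp_pos]. }
  lra.
Qed.

Lemma RInt_from_1_le y : 1 <= y -> RInt f 1 y <= 2 * M * exp (- 1 / 2).
Proof.
  intros Hy.
  assert (HG : forall t, Rmin 1 y <= t <= Rmax 1 y ->
     is_derive (fun t => - 2 * M * exp (- t / 2)) t (M * exp (- t / 2))).
  { intros t Ht. auto_derive; [auto | lra]. }
  assert (Hcont : forall t, Rmin 1 y <= t <= Rmax 1 y -> continuous (fun t => M * exp (- t / 2)) t).
  { intros t Ht. apply (ex_derive_continuous (K := R_AbsRing) (V := R_NormedModule)). auto_derive. auto. }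
  pose proof (is_RInt_derive _ _ 1 y HG Hcont) as HI.
  assert (Hle : RInt f 1 y <= RInt (fun t => M * exp (- t / 2)) 1 y).
  { apply RInt_le; [lra | apply ex_RInt_pos; lra | eexists; exact HI |].
    intros; apply f_le_exp; lra. }
  rewrite (is_RInt_unique _ _ _ _ HI) in Hle. unfold minus, plus, opp in Hle; simpl in Hle.
  assert (0 <= 2 * M * exp (- y / 2)) by (pose proof M_nonneg; pose proof (exp_pos (- y / 2)); nra).
  replace (- 1 / 2) with (- (1) / 2) by lra. lra.
Qed.

Lemma RInt_le_of_power_exp_bounds x y :
  0 < x <= y -> RInt f x y <= M / (b + 1) + 2 * M * exp (- 1 / 2).
Proof.
  intros Hxy.
  set (x' := Rmin x 1). set (y' := Rmax y 1).
  assert (0 < x' <= 1) by (unfold x'; split; [apply Rmin_glb_lt; lra | apply Rmin_r]).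
  assert (1 <= y') by apply Rmax_r.
  assert (x' <= x) by apply Rmin_l. assert (y <= y') by apply Rmax_l.
  pose proof (RInt_le_RInt_superset x' x y y' ltac:(lra) ltac:(lra) ltac:(lra) ltac:(lra)) as Hsub.
  rewrite <- (RInt_Chasles f x' 1 y') in Hsub by (apply ex_RInt_pos; lra).
  pose proof (RInt_to_1_le x' ltac:(assumption)). pose proof (RInt_from_1_le y' ltac:(assumption)).
  unfold plus in Hsub; simpl in Hsub. lra.
Qed.

End NonnegIntegrand.

Definition power_exp (c : R) (q : R -> R) (t : R) : R := Rpower t c * exp (q t).

Lemma power_exp_pos c q t : 0 < power_exp c q t.
Proof. apply Rmult_lt_0_compat; apply exp_pos. Qed.

Section PowerExpIntegral.

Variables (c A : R) (q : R -> R).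
Hypothesis c_gt : -1 < c.
Hypothesis q_derivable : forall t, ex_derive q t.
Hypothesis q_le : forall t, 0 < t -> q t <= A - t.

Lemma power_exp_continuous t : 0 < t -> continuous (power_exp c q) t.
Proof.
  intros Ht. apply (ex_derive_continuous (K := R_AbsRing) (V := R_NormedModule)).
  apply ex_derive_mult.
  - apply (ex_derive_comp exp (fun t => c * ln t)).
    + apply ex_derive_Reals_1, derivable_pt_exp.
    + auto_derive. exact Ht.
  - apply (ex_derive_comp exp q); [apply ex_derive_Reals_1, derivable_pt_exp | apply q_derivable].
Qed.

Let power_exp_nonneg t (_ : 0 < t) : 0 <= power_exp c q t := Rlt_le _ _ (power_exp_pos c q t).

Lemma power_exp_integral_sup : exists l, is_RInt_0oo (power_exp c q) l /\
  forall x y, 0 < x <= y -> RInt (power_exp c q) x y <= l.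
Proof.
  destruct (mul_ln_le_half_add c) as [K HK].
  set (M := exp A * (1 + exp K)).
  assert (HAM : exp A <= M) by (unfold M; pose proof (exp_pos A); pose proof (exp_pos K); nra).
  eapply is_RInt_0oo_sup; [exact power_exp_continuous | exact power_exp_nonneg |].
  apply (RInt_le_of_power_exp_bounds _ power_exp_continuous power_exp_nonneg c M c_gt).
  - intros t Ht. unfold power_exp. rewrite (Rmult_comm M).
    apply Rmult_le_compat_l; [left; apply exp_pos |].
    pose proof (exp_le_exp (q t) A ltac:(pose proof (q_le t ltac:(lra)); lra)). lra.
  - intros t Ht. unfold power_exp, Rpower. rewrite <- exp_plus.
    assert (exp (c * ln t + q t) <= exp A * exp K * exp (- t / 2)).
    { rewrite <- !exp_plus. apply exp_le_exp.
      pose proof (HK t Ht). pose proof (q_le t ltac:(lra)). lra. }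
    pose proof (exp_pos (- t / 2)). pose proof (exp_pos A). unfold M. nra.
Qed.

Lemma is_RInt_0oo_power_exp : is_RInt_0oo (power_exp c q) (RInt_0oo (power_exp c q)).
Proof.
  destruct power_exp_integral_sup as [l [Hl _]].
  rewrite (is_RInt_gen_unique _ _ Hl). exact Hl.
Qed.

Lemma RInt_0oo_power_exp_pos : 0 < RInt_0oo (power_exp c q).
Proof.
  destruct power_exp_integral_sup as [l [Hl Hsup]].
  rewrite (is_RInt_gen_unique _ _ Hl).
  assert (0 < RInt (power_exp c q) 1 2).
  { apply RInt_gt_0; [lra | intros; apply power_exp_pos | intros; apply power_exp_continuous; lra]. }
  pose proof (Hsup 1 2 ltac:(lra)). lra.
Qed.

End PowerExpIntegral.

Lemma Gamma_pos a : 0 < a -> 0 < Gamma a.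
Proof.
  intros Ha. apply (RInt_0oo_power_exp_pos (a - 1) 0 Ropp); [lra | | intros; lra].
  intros t. auto_derive. auto.
Qed.

Definition pcf_kernel (c u : R) : R -> R := power_exp c (fun t => - t ^ 2 / 2 + u * t).

(* [D_(-c-1)(-u) = exp(-u^2/4) pcf_integral c u / Gamma (c + 1)]. *)
Definition pcf_integral (c u : R) : R := RInt_0oo (pcf_kernel c u).

Section PcfKernelIntegrable.

Variables (c u : R).
Hypothesis c_gt : -1 < c.

Let q_derivable t : ex_derive (fun t => - t ^ 2 / 2 + u * t) t.
Proof. auto_derive. auto. Qed.

(* [-t^2/2 + u t <= (u+1)^2/2 - t] is [0 <= (t - u - 1)^2 / 2]. *)
Let q_le t : 0 < t -> - t ^ 2 / 2 + u * t <= (u + 1) ^ 2 / 2 - t.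
Proof. intros _. pose proof (pow2_ge_0 (t - u - 1)). nra. Qed.

Lemma is_RInt_pcf : is_RInt_0oo (pcf_kernel c u) (pcf_integral c u).
Proof. exact (is_RInt_0oo_power_exp c _ _ c_gt q_derivable q_le). Qed.

Lemma pcf_integral_pos : 0 < pcf_integral c u.
Proof. exact (RInt_0oo_power_exp_pos c _ _ c_gt q_derivable q_le). Qed.

End PcfKernelIntegrable.

Lemma exp_sub_1_sub_bounds y : 0 <= exp y - 1 - y <= y * (exp y - 1).
Proof.
  pose proof (exp_ineq1_le y). pose proof (exp_ineq1_le (- y)).
  assert (exp (- y) * exp y = 1) by (rewrite <- exp_plus, Rplus_opp_l; apply exp_0).
  pose proof (exp_pos y). split; [lra |].
  assert (0 <= (exp (- y) - (1 - y)) * exp y) by (apply Rmult_le_pos; lra). nra.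
Qed.

Lemma Rabs_exp_sub_1_le y : Rabs (exp y - 1) <= Rabs y * exp (Rabs y).
Proof.
  destruct (Rle_dec 0 y) as [Hy | Hy].
  - pose proof (exp_sub_1_sub_bounds y). pose proof (exp_ineq1_le y).
    rewrite !(Rabs_right y), Rabs_right by lra.
    pose proof (exp_pos y). nra.
  - pose proof (exp_sub_1_sub_bounds (- y)). pose proof (exp_ineq1_le y).
    assert (exp y <= 1) by (rewrite <- exp_0; apply exp_le_exp; lra).
    rewrite (Rabs_left y), Rabs_left1 by lra. nra.
Qed.

Lemma pcf_kernel_shift c u h t : pcf_kernel c (u + h) t = pcf_kernel c u t * exp (h * t).
Proof. unfold pcf_kernel, power_exp. rewrite Rmult_assoc, <- exp_plus. do 2 f_equal. ring. Qed.

Lemma pcf_kernel_succ c u t : 0 < t -> pcf_kernel (c + 1) u t = t * pcf_kernel c u t.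
Proof. intros Ht. unfold pcf_kernel, power_exp. rewrite Rpower_plus, Rpower_1 by auto. ring. Qed.

Lemma pcf_integral_le c u v : -1 < c -> u <= v -> pcf_integral c u <= pcf_integral c v.
Proof.
  intros Hc Huv.
  assert (Rabs (pcf_integral c u) <= pcf_integral c v).
  { apply (is_RInt_0oo_norm_le _ _ _ _ (is_RInt_pcf c u Hc) (is_RInt_pcf c v Hc)).
    intros t Ht. rewrite Rabs_right by (left; apply power_exp_pos).
    apply Rmult_le_compat_l; [left; apply exp_pos | apply exp_le_exp; nra]. }
  pose proof (Rle_abs (pcf_integral c u)). lra.
Qed.

Lemma pcf_integral_lipschitz c u h : -1 < c -> Rabs h <= 1 ->
  Rabs (pcf_integral c (u + h) - pcf_integral c u) <= Rabs h * pcf_integral (c + 1) (u + 1).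
Proof.
  intros Hc Hh.
  replace (pcf_integral c (u + h) - pcf_integral c u)
    with (1 * pcf_integral c (u + h) + -1 * pcf_integral c u) by ring.
  replace (Rabs h * pcf_integral (c + 1) (u + 1))
    with (Rabs h * pcf_integral (c + 1) (u + 1) + 0 * pcf_integral c u) by ring.
  apply (is_RInt_0oo_norm_le _ _ _ _
    (is_RInt_0oo_lin _ _ _ _ 1 (-1) (is_RInt_pcf c (u + h) Hc) (is_RInt_pcf c u Hc))
    (is_RInt_0oo_lin _ _ _ _ (Rabs h) 0 (is_RInt_pcf (c + 1) (u + 1) ltac:(lra)) (is_RInt_pcf c u Hc))).
  intros t Ht. rewrite pcf_kernel_shift, pcf_kernel_succ, pcf_kernel_shift by auto.
  pose proof (power_exp_pos c (fun t => - t ^ 2 / 2 + u * t) t) as Hk; fold (pcf_kernel c u t) in Hk.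
  replace (1 * (pcf_kernel c u t * exp (h * t)) + -1 * pcf_kernel c u t)
    with (pcf_kernel c u t * (exp (h * t) - 1)) by ring.
  rewrite Rabs_mult, (Rabs_right (pcf_kernel c u t)) by lra.
  assert (Rabs (exp (h * t) - 1) <= Rabs h * t * exp (1 * t)).
  { eapply Rle_trans; [apply Rabs_exp_sub_1_le |].
    rewrite Rabs_mult, (Rabs_right t) by lra.
    apply Rmult_le_compat_l; [pose proof (Rabs_pos h); nra |].
    apply exp_le_exp, Rmult_le_compat_r; lra. }
  pose proof (Rabs_pos (exp (h * t) - 1)). nra.
Qed.

Lemma pcf_integral_taylor c u h : -1 < c ->
  Rabs (pcf_integral c (u + h) - pcf_integral c u - h * pcf_integral (c + 1) u)
  <= h * (pcf_integral (c + 1) (u + h) - pcf_integral (c + 1) u).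
Proof.
  intros Hc.
  replace (pcf_integral c (u + h) - pcf_integral c u - h * pcf_integral (c + 1) u)
    with (1 * (1 * pcf_integral c (u + h) + -1 * pcf_integral c u) + - h * pcf_integral (c + 1) u)
    by ring.
  replace (h * (pcf_integral (c + 1) (u + h) - pcf_integral (c + 1) u))
    with (h * pcf_integral (c + 1) (u + h) + - h * pcf_integral (c + 1) u) by ring.
  apply (is_RInt_0oo_norm_le _ _ _ _
    (is_RInt_0oo_lin _ _ _ _ 1 (- h)
       (is_RInt_0oo_lin _ _ _ _ 1 (-1) (is_RInt_pcf c (u + h) Hc) (is_RInt_pcf c u Hc))
       (is_RInt_pcf (c + 1) u ltac:(lra)))
    (is_RInt_0oo_lin _ _ _ _ h (- h)
       (is_RInt_pcf (c + 1) (u + h) ltac:(lra)) (is_RInt_pcf (c + 1) u ltac:(lra)))).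
  intros t Ht. rewrite !pcf_kernel_succ, !pcf_kernel_shift by auto.
  pose proof (power_exp_pos c (fun t => - t ^ 2 / 2 + u * t) t) as Hk; fold (pcf_kernel c u t) in Hk.
  pose proof (exp_sub_1_sub_bounds (h * t)) as [H0 H1].
  replace (1 * (1 * (pcf_kernel c u t * exp (h * t)) + -1 * pcf_kernel c u t) + - h * (t * pcf_kernel c u t))
    with (pcf_kernel c u t * (exp (h * t) - 1 - h * t)) by ring.
  replace (h * (t * (pcf_kernel c u t * exp (h * t))) + - h * (t * pcf_kernel c u t))
    with (pcf_kernel c u t * (h * t * (exp (h * t) - 1))) by ring.
  rewrite Rabs_mult, !Rabs_right by lra.
  apply Rmult_le_compat_l; lra.
Qed.

Lemma is_derive_pcf_integral c u : -1 < c ->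
  is_derive (pcf_integral c) u (pcf_integral (c + 1) u).
Proof.
  intros Hc. apply is_derive_Reals. intros eps Heps.
  set (L := pcf_integral (c + 1 + 1) (u + 1)).
  assert (HL : 0 < L) by (apply pcf_integral_pos; lra).
  assert (Hd : 0 < Rmin 1 (eps / (L + 1))) by (apply Rmin_glb_lt; [lra | apply Rdiv_lt_0_compat; lra]).
  exists (mkposreal _ Hd). intros h Hh0 Hh. simpl in Hh.
  assert (Hh1 : Rabs h <= 1) by (pose proof (Rmin_l 1 (eps / (L + 1))); lra).
  assert (Hh2 : Rabs h < eps / (L + 1)) by (pose proof (Rmin_r 1 (eps / (L + 1))); lra).
  assert (Habs : 0 < Rabs h) by (apply Rabs_pos_lt; auto).
  pose proof (pcf_integral_taylor c u h Hc) as Htaylor.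
  pose proof (pcf_integral_lipschitz (c + 1) u h ltac:(lra) Hh1) as Hlip. fold L in Hlip.
  set (A := pcf_integral c (u + h) - pcf_integral c u - h * pcf_integral (c + 1) u) in *.
  set (B := pcf_integral (c + 1) (u + h) - pcf_integral (c + 1) u) in *.
  assert (HA : Rabs A <= Rabs h * Rabs B).
  { eapply Rle_trans; [exact Htaylor |]. rewrite <- Rabs_mult. apply Rle_abs. }
  replace ((pcf_integral c (u + h) - pcf_integral c u) / h - pcf_integral (c + 1) u) with (A / h)
    by (unfold A; field; auto).
  unfold Rdiv. rewrite Rabs_mult, Rabs_inv.
  assert (Rabs A * / Rabs h <= Rabs B).
  { apply (Rmult_le_reg_r (Rabs h)); auto. rewrite Rmult_assoc, Rinv_l by lra. lra. }
  assert (Rabs h * L < eps).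
  { assert (eps / (L + 1) * L < eps).
    { apply (Rmult_lt_reg_r (L + 1)); [lra |]. field_simplify; nra. }
    pose proof (Rmult_lt_compat_r L _ _ HL Hh2). lra. }
  lra.
Qed.

Definition psik (mu kappa sigma rho : R) (k : nat) (x : R) : R :=
  (sqrt (2 * kappa) / sigma) ^ k / Gamma (rho / kappa)
  * pcf_integral (rho / kappa - 1 + INR k) (sqrt (2 * kappa) / sigma * (x - mu)).

Section PsiDerivatives.

Variables mu kappa sigma rho : R.
Hypotheses (Hkappa : 0 < kappa) (Hsigma : 0 < sigma) (Hrho : 0 < rho).

Let s_pos : 0 < sqrt (2 * kappa) / sigma.
Proof. apply Rdiv_lt_0_compat; [apply sqrt_lt_R0 |]; lra. Qed.

Let Gamma_a_pos : 0 < Gamma (rho / kappa).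
Proof. apply Gamma_pos, Rdiv_lt_0_compat; lra. Qed.

Let index_gt k : -1 < rho / kappa - 1 + INR k.
Proof. pose proof (pos_INR k). pose proof (Rdiv_lt_0_compat rho kappa Hrho Hkappa). lra. Qed.

Lemma psi_eq_psik0 x : psi mu kappa sigma rho x = psik mu kappa sigma rho 0 x.
Proof.
  unfold psi, Dpar, psik, pcf_integral, pcf_kernel, power_exp. rewrite pow_O. change (INR 0) with 0.
  replace (- (- rho / kappa)) with (rho / kappa) by (field; lra).
  replace (rho / kappa - 1 + 0) with (rho / kappa - 1) by ring.
  set (w := - (x - mu) / sigma * sqrt (2 * kappa)).
  replace (fun t => Rpower t (rho / kappa - 1) * exp (- t ^ 2 / 2 - w * t))
    with (fun t => Rpower t (rho / kappa - 1)
                   * exp (- t ^ 2 / 2 + sqrt (2 * kappa) / sigma * (x - mu) * t))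
    by (apply functional_extensionality; intro t; unfold w; do 2 f_equal; field; lra).
  assert (Hsq : sqrt (2 * kappa) * sqrt (2 * kappa) = 2 * kappa) by (apply sqrt_sqrt; lra).
  assert (Hcancel : exp (kappa * (x - mu) ^ 2 / (2 * sigma ^ 2)) * exp (- w ^ 2 / 4) = 1).
  { rewrite <- exp_plus, <- exp_0. f_equal. unfold w.
    replace ((- (x - mu) / sigma * sqrt (2 * kappa)) ^ 2)
      with ((x - mu) ^ 2 / sigma ^ 2 * (sqrt (2 * kappa) * sqrt (2 * kappa))) by (field; lra).
    rewrite Hsq. field. lra. }
  match goal with |- exp ?E1 * (exp ?E2 / ?G * ?I) = _ =>
    transitivity (exp E1 * exp E2 * (/ G * I)); [unfold Rdiv; ring |] end.
  rewrite Hcancel. field. lra.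
Qed.

Lemma is_derive_psik k x :
  is_derive (psik mu kappa sigma rho k) x (psik mu kappa sigma rho (S k) x).
Proof.
  unfold psik. set (s := sqrt (2 * kappa) / sigma). set (a := rho / kappa).
  rewrite S_INR. replace (a - 1 + (INR k + 1)) with (a - 1 + INR k + 1) by ring.
  replace (s ^ S k / Gamma a * pcf_integral (a - 1 + INR k + 1) (s * (x - mu)))
    with (s ^ k / Gamma a * (s * pcf_integral (a - 1 + INR k + 1) (s * (x - mu))))
    by (rewrite <- tech_pow_Rmult; unfold a; field; lra).
  apply is_derive_scal.
  apply (is_derive_comp (pcf_integral (a - 1 + INR k)) (fun x => s * (x - mu)) x _ s).
  - apply is_derive_pcf_integral, index_gt.
  - auto_derive; [auto | ring].
Qed.

Lemma dpsi_eq_psik k x : dpsi mu kappa sigma rho k x = psik mu kappa sigma rho k x.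
Proof.
  unfold dpsi. revert x. induction k as [| k IH]; intros x; simpl.
  - apply psi_eq_psik0.
  - rewrite (Derive_ext _ _ x IH). apply is_derive_unique, is_derive_psik.
Qed.

Lemma psik_pos k x : 0 < psik mu kappa sigma rho k x.
Proof.
  unfold psik. apply Rmult_lt_0_compat; [apply Rdiv_lt_0_compat; [apply pow_lt |] |]; auto.
  apply pcf_integral_pos, index_gt.
Qed.

Lemma psik_le k x y : x <= y -> psik mu kappa sigma rho k x <= psik mu kappa sigma rho k y.
Proof.
  intros Hxy. unfold psik. apply Rmult_le_compat_l.
  - left. apply Rdiv_lt_0_compat; [apply pow_lt |]; auto.
  - apply pcf_integral_le; [apply index_gt |]. apply Rmult_le_compat_l; lra.
Qed.

End PsiDerivatives.

Lemma eventually_neg_of_derive_le (f df : R -> R) x m : 0 < m ->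
  (forall t, x <= t -> is_derive f t (df t)) -> (forall t, x <= t -> df t <= - m) ->
  exists x', x <= x' /\ f x' < 0.
Proof.
  intros Hm Hder Hdf.
  set (x' := x + (Rabs (f x) + 1) / m).
  assert (Hstep : x' - x = (Rabs (f x) + 1) / m) by (unfold x'; ring).
  assert (Hxx' : x < x') by (pose proof (Rabs_pos (f x)); pose proof (Rdiv_lt_0_compat (Rabs (f x) + 1) m ltac:(lra) Hm); lra).
  exists x'. split; [lra |].
  destruct (MVT_gen f x x' df) as [z [Hz Hmvt]];
    rewrite Rmin_left, Rmax_right in * by lra.
  - intros t Ht. apply Hder. lra.
  - intros t Ht. apply derivable_continuous_pt. exists (df t). apply is_derive_Reals, Hder. lra.
  - assert (df z * (x' - x) <= - m * (x' - x)) by (apply Rmult_le_compat_r; [lra | apply Hdf; lra]).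
    assert (m * (x' - x) = Rabs (f x) + 1) by (rewrite Hstep; field; lra).
    pose proof (Rle_abs (f x)). lra.
Qed.

Lemma IVT_interv_le (f : R -> R) a b v : a <= b ->
  (forall x, a <= x <= b -> continuous f x) -> f a <= v <= f b ->
  exists x, a <= x <= b /\ f x = v.
Proof.
  intros Hab Hcont [Hav Hvb].
  destruct (Req_dec (f a) v) as [Ea | Na]; [exists a; split; [lra | auto] |].
  destruct (Req_dec (f b) v) as [Eb | Nb]; [exists b; split; [lra | auto] |].
  assert (Hlt : a < b) by (destruct (Req_dec a b) as [-> |]; lra).
  destruct (IVT_interv (fun x => f x - v) a b) as [x [Hx Hfx]]; try lra.
  - intros x Hx. apply continuity_pt_minus; [apply continuity_pt_filterlim, Hcont; auto |].
    apply continuity_pt_const. intros u w; reflexivity.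
  - exists x. split; [auto | lra].
Qed.

Lemma unique_root_between (h : R -> R) a b r : continuity h -> a <= b -> h a * h b <= 0 ->
  (forall z, h z = 0 -> z = r) -> a <= r <= b.
Proof.
  intros Hcont Hab Hsign Huniq.
  destruct (IVT_cor h a b Hcont Hab Hsign) as [z [Hz Hhz]].
  rewrite <- (Huniq z Hhz). exact Hz.
Qed.

Definition Rtilde_level (mu kappa rho beta c y : R) : R :=
  (c * rho * (rho + kappa) - mu * kappa + beta * (rho + 2 * kappa) * y) / rho.

Section Hfunction.

Variables mu kappa sigma rho beta c ybar : R.
Hypotheses (Hkappa : 0 < kappa) (Hsigma : 0 < sigma) (Hrho : 0 < rho) (Hbeta : 0 < beta).

Notation H := (Hfun mu kappa sigma rho beta c ybar).
Notation psik := (psik mu kappa sigma rho).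
Notation level := (Rtilde_level mu kappa rho beta c ybar).

Lemma c_sub_Rtilde x : c - Rtilde mu kappa rho beta x ybar = (level - x) / (rho + kappa).
Proof. unfold Rtilde, Rtilde_level. field. lra. Qed.

Lemma Hfun_eq x : H x = psik 1 x * ((level - x) / (rho + kappa)) + psik 0 x / (rho + kappa).
Proof. unfold Hfun. rewrite c_sub_Rtilde, dpsi_eq_psik, psi_eq_psik0 by auto. reflexivity. Qed.

(* The terms [psi' x * (-1/(rho+kappa))] and [psi' x / (rho+kappa)] cancel. *)
Lemma is_derive_Hfun x : is_derive H x (psik 2 x * ((level - x) / (rho + kappa))).
Proof.
  apply (is_derive_ext (fun x => psik 1 x * ((level - x) / (rho + kappa)) + psik 0 x / (rho + kappa))).
  { intros t. symmetry. apply Hfun_eq. }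
  pose proof (is_derive_psik mu kappa sigma rho Hkappa Hrho 1 x) as D1.
  pose proof (is_derive_psik mu kappa sigma rho Hkappa Hrho 0 x) as D0.
  auto_derive.
  - split; [eexists; exact D1 | split; [eexists; exact D0 | auto]].
  - replace (Derive (fun t : R => psik 1 t) x) with (psik 2 x) by (symmetry; apply is_derive_unique, D1).
    replace (Derive (fun t : R => psik 0 t) x) with (psik 1 x) by (symmetry; apply is_derive_unique, D0).
    field. lra.
Qed.

Lemma continuity_Hfun : continuity H.
Proof.
  intros x. apply derivable_continuous_pt. eexists. apply is_derive_Reals, is_derive_Hfun.
Qed.

Lemma Hfun_pos x : x <= level -> 0 < H x.
Proof.
  intros Hx. rewrite Hfun_eq.
  pose proof (psik_pos mu kappa sigma rho Hkappa Hsigma Hrho 1 x).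
  pose proof (psik_pos mu kappa sigma rho Hkappa Hsigma Hrho 0 x).
  assert (0 <= (level - x) / (rho + kappa)) by (apply Rdiv_le_0_compat; lra).
  assert (0 < psik 0 x / (rho + kappa)) by (apply Rdiv_lt_0_compat; lra).
  nra.
Qed.

(* Beyond [level + rho + kappa], H decreases at least at the rate [psi''] takes there. *)
Lemma Hfun_eventually_neg x : exists x', x <= x' /\ H x' < 0.
Proof.
  set (x0 := Rmax x (level + (rho + kappa))).
  assert (Hx0 : x <= x0 /\ level + (rho + kappa) <= x0) by (split; [apply Rmax_l | apply Rmax_r]).
  destruct (eventually_neg_of_derive_le H (fun t => psik 2 t * ((level - t) / (rho + kappa)))
              x0 (psik 2 x0)) as [x' [Hx' Hneg]].
  - apply psik_pos; auto.
  - intros t _. apply is_derive_Hfun.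
  - intros t Ht.
    assert (Hslope : (level - t) / (rho + kappa) <= -1).
    { apply (Rmult_le_reg_r (rho + kappa)); [lra |].
      unfold Rdiv. rewrite Rmult_assoc, Rinv_l by lra. lra. }
    pose proof (psik_le mu kappa sigma rho Hkappa Hsigma Hrho 2 x0 t Ht).
    pose proof (psik_pos mu kappa sigma rho Hkappa Hsigma Hrho 2 x0). nra.
  - exists x'. split; [lra | auto].
Qed.

Lemma Hfun_at_mu : H mu =
  psik 1 mu * (beta * (rho + 2 * kappa) / (rho * (rho + kappa)))
  * (ybar - ystar mu kappa sigma rho beta c).
Proof.
  rewrite Hfun_eq. unfold ystar, Rtilde_level.
  rewrite dpsi_eq_psik, psi_eq_psik0 by auto.
  pose proof (psik_pos mu kappa sigma rho Hkappa Hsigma Hrho 1 mu).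
  field. repeat split; lra.
Qed.

Let slope_at_mu_pos : 0 < psik 1 mu * (beta * (rho + 2 * kappa) / (rho * (rho + kappa))).
Proof.
  apply Rmult_lt_0_compat; [apply psik_pos; auto |].
  apply Rdiv_lt_0_compat; apply Rmult_lt_0_compat; lra.
Qed.

Lemma Hfun_root_ge_mu r : ystar mu kappa sigma rho beta c <= ybar ->
  (forall z, H z = 0 -> z = r) -> mu <= r.
Proof.
  intros Hys Huniq.
  destruct (Hfun_eventually_neg mu) as [b [Hb Hneg]].
  assert (Hmu : 0 <= H mu) by (rewrite Hfun_at_mu; apply Rmult_le_pos; lra).
  apply (unique_root_between H mu b r continuity_Hfun Hb); [nra | exact Huniq].
Qed.

Lemma Hfun_root_le_mu r : ybar <= ystar mu kappa sigma rho beta c ->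
  (forall z, H z = 0 -> z = r) -> r <= mu.
Proof.
  intros Hys Huniq.
  set (a := Rmin mu level).
  assert (Ha : a <= mu /\ a <= level) by (split; [apply Rmin_l | apply Rmin_r]).
  assert (Ha_pos : 0 < H a) by (apply Hfun_pos; lra).
  assert (Hmu : H mu <= 0).
  { rewrite Hfun_at_mu. apply Rmult_le_0_l; lra. }
  apply (unique_root_between H a mu r continuity_Hfun); [lra | nra | exact Huniq].
Qed.

End Hfunction.

Theorem proposition5p1
  (mu kappa sigma rho beta c ybar : R)
  (Hkappa : 0 < kappa) (Hsigma : 0 < sigma) (Hrho : 0 < rho) (Hbeta : 0 < beta)
  (Hc : 0 <= c) (Hybar : 0 < ybar)
  (xt : R)
  (Hxt : Hfun mu kappa sigma rho beta c ybar xt = 0)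
  (Hxt_uniq : forall x, Hfun mu kappa sigma rho beta c ybar x = 0 -> x = xt)
  (Ft : R -> R)
  (HFt_end : Ft ybar = xt)
  (HFt_cont : forall y, 0 <= y <= ybar -> continuous Ft y)
  (HFt_ode : forall y, 0 < y < ybar ->
       is_derive Ft y (Gfun mu kappa sigma rho beta c y (Ft y)))
  (HFt_uniq : forall g : R -> R, g ybar = xt ->
       (forall y, 0 <= y <= ybar -> continuous g y) ->
       (forall y, 0 < y < ybar -> is_derive g y (Gfun mu kappa sigma rho beta c y (g y))) ->
       forall y, 0 <= y <= ybar -> g y = Ft y)
  (HF_incr : forall y1 y2, 0 <= y1 -> y1 < y2 -> y2 <= ybar ->
       Ft y1 - beta * y1 < Ft y2 - beta * y2) :
  let F := fun y => Ft y - beta * y in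
  let ys := ystar mu kappa sigma rho beta c in
  (F 0 > mu -> forall y, 0 <= y <= ybar -> mu - beta * y < F y) /\
  (F 0 <= mu -> ybar >= ys -> exists y, 0 <= y <= ybar /\ F y = mu - beta * y) /\
  (ybar <= ys -> mu - beta * ybar >= F ybar).
Proof.
  intros F ys. unfold F. split; [| split].
  - intros HF0 y Hy.
    destruct (Req_dec y 0) as [-> | Hy0]; [lra |].
    pose proof (HF_incr 0 y ltac:(lra) ltac:(lra) ltac:(lra)). nra.
  - intros HF0 Hys.
    pose proof (Hfun_root_ge_mu mu kappa sigma rho beta c ybar Hkappa Hsigma Hrho Hbeta xt
                  (Rge_le _ _ Hys) Hxt_uniq).
    destruct (IVT_interv_le Ft 0 ybar mu) as [y [Hy HFty]]; [lra | exact HFt_cont | lra |].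
    exists y. split; [exact Hy | lra].
  - intros Hys.
    pose proof (Hfun_root_le_mu mu kappa sigma rho beta c ybar Hkappa Hsigma Hrho Hbeta xt
                  Hys Hxt_uniq).
    lra.
Qed.
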